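(* Let $B\in\mathbb{R}^{p\times n}$, $\lambda_1,\lambda_2>0$, $l\le 0\le u$ in $\mathbb{R}^n$, $\Omega=\{x: l\le x\le u\}$ and $g(x)=\lambda_1\|Bx\|_0+\lambda_2\|x\|_0+\delta_\Omega(x)$. Let $\Xi\subset\mathbb{R}^n$ be compact and $0<\underline{\mu}<\overline{\mu}$ be constants, and define $$\mathcal{Z}=\bigcup_{z\in\Xi,\ \mu\in[\underline\mu,\overline\mu]}\mathrm{prox}_{\mu^{-1}g}(z).$$ Then there exists $\nu>0$ (depending on $\Xi,\underline\mu,\overline\mu$) such that $\inf_{u\in\mathcal{Z}\setminus\{0\}}|[B;I]u|_{\min}\ge\nu$.
   Context: $\|y\|_0$ is the number of nonzero entries of $y$, $\mathrm{supp}(y)=\{i:y_i\ne0\}$, and $|y|_{\min}=\min_{i\in\mathrm{supp}(y)}|y_i|$. $\delta_\Omega$ is the indicator of $\Omega$. $[B;I]\in\mathbb{R}^{(p+n)\times n}$ is $B$ stacked on top of the $n\times n$ identity. For $\mu>0$, $\mathrm{prox}_{\mu g}(z)=\arg\min_x\{\frac{1}{2\mu}\|x-z\|^2+g(x)\}$. *)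

From HB Require Import structures.
From mathcomp Require Import all_boot all_order all_algebra.
From mathcomp Require Import all_classical all_reals all_analysis.
Set Implicit Arguments. Unset Strict Implicit. Unset Printing Implicit Defensive.
Import Order.TTheory GRing.Theory Num.Theory.
Import numFieldNormedType.Exports.
Local Open Scope classical_set_scope.
Local Open Scope ring_scope.

Definition l0norm (R : realType) (m : nat) (y : 'cV[R]_m) : nat :=
  #|[set i : 'I_m | y i 0 != 0]|.

Definition sqnorm (R : realType) (m : nat) (y : 'cV[R]_m) : R :=
  \sum_(i < m) (y i 0) ^+ 2.

Definition box (R : realType) (n : nat) (l u : 'cV[R]_n) : set 'cV[R]_n :=
  [set x | forall i, l i 0 <= x i 0 <= u i 0].

Definition indic (R : realType) (T : Type) (A : set T) (x : T) : \bar R :=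
  if `[< A x >] then 0%E else +oo%E.

Definition gfun (R : realType) (p n : nat) (B : 'M[R]_(p, n)) (lam1 lam2 : R)
  (l u : 'cV[R]_n) (x : 'cV[R]_n) : \bar R :=
  ((lam1 * (l0norm (B *m x))%:R + lam2 * (l0norm x)%:R)%:E + indic R (box l u) x)%E.

Definition prox (R : realType) (n : nat) (t : R) (f : 'cV[R]_n -> \bar R)
  (z : 'cV[R]_n) : set 'cV[R]_n :=
  [set x | forall y, ((1 / (2 * t) * sqnorm (x - z))%:E + f x
                      <= (1 / (2 * t) * sqnorm (y - z))%:E + f y)%E].

(* |y|_min = min of |y_i| over supp(y) (= +oo if supp y is empty) *)
Definition absmin (R : realType) (m : nat) (y : 'cV[R]_m) : \bar R :=
  \big[Order.min/+oo%E]_(i < m | y i 0 != 0) (`|y i 0|%:E).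

Definition BI (R : realType) (p n : nat) (B : 'M[R]_(p, n)) : 'M[R]_(p + n, n) :=
  col_mx B 1%:M.

(* A point x of prox_{mu^-1 g}(z) lies in Omega and minimises
   mu/2 ||x - z||^2 + lam1 ||Bx||_0 + lam2 ||x||_0 there.  Comparing with 0 in Omega
   gives ||x - z|| <= ||z||, so x stays bounded while z ranges over the compact Xi.
   If k is in supp([B;I]x) and y in Omega has supp([B;I]y) within supp([B;I]x) \ {k},
   the penalty of y is smaller by at least min(lam1, lam2), so optimality forces
   ||y - z||^2 - ||x - z||^2 >= 2 min(lam1, lam2) / mu_max, hence ||y - x||^2 >= delta
   for some delta > 0 depending only on Xi and mu_max.  For each of the finitely many
   pairs (S, k), the bounded points of Omega with [B;I]-support in S that are delta-far
   from every such y form a compact set on which |([B;I]x)_k| is continuous and never 0,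
   hence bounded below; nu is the least of these bounds. *)

From Pilot Require Import Defs.
From HB Require Import structures.
From mathcomp Require Import all_boot all_order all_algebra.
From mathcomp Require Import all_classical all_reals all_analysis.
From mathcomp Require Import lra.
Import Order.TTheory GRing.Theory Num.Theory.
Import numFieldNormedType.Exports.
Local Open Scope classical_set_scope.
Local Open Scope ring_scope.

Set Implicit Arguments.
Unset Strict Implicit.

Lemma compact_gt0_lbound (T : topologicalType) (R : realType) (f : T -> R)
    (A : set T) :
  compact A -> continuous f -> (forall x, A x -> 0 < f x) ->
  exists2 e, 0 < e & forall x, A x -> e <= f x.
Proof.
move=> cA cf f_gt0; have [->|/set0P A0] := eqVneq A set0; first by exists 1.
have [c /set_mem Ac cmin] := compact_EVT_min A0 cA (continuous_subspaceT cf).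
by exists (f c) => [|x Ax]; [exact: f_gt0 | exact/cmin/mem_set].
Qed.

Lemma fin_uniform_gt0 (I : finType) (R : realType) (P : I -> R -> Prop) :
  (forall i e e', 0 < e' <= e -> P i e -> P i e') ->
  (forall i, exists2 e, 0 < e & P i e) -> exists2 e, 0 < e & forall i, P i e.
Proof.
move=> P_anti P_ex.
have /choice[e e_spec] : forall i, exists e : R, 0 < e /\ P i e.
  by move=> i; have [e] := P_ex i; exists e.
have min_gt0 : 0 < \big[Num.min/1]_i e i.
  apply: (big_ind (fun x => 0 < x)) => // [x y|i _]; first by rewrite lt_min => ->.
  by case: (e_spec i).
exists (\big[Num.min/1]_i e i) => // i; apply: P_anti (e_spec i).2.
by rewrite min_gt0 (bigD1 i) //= ge_min lexx.
Qed.

Lemma continuous_closed_preimage (T U : topologicalType) (f : T -> U) (D : set U) :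
  continuous f -> closed D -> closed (f @^-1` D).
Proof. by move=> cf; apply: preimage_closed => x _; exact: cf. Qed.

Section matrix_topology.
Variable R : realType.

Lemma mx_entry_le_norm m n (A : 'M[R]_(m, n)) i j : `|A i j| <= `|A|.
Proof.
rewrite [leRHS]/Num.Def.normr /= mx_normrE.
by apply/bigmax_geP; right; exists (i, j).
Qed.

Lemma mx_norm_le m n (A : 'M[R]_(m, n)) (b : R) :
  0 <= b -> (forall i j, `|A i j| <= b) -> `|A| <= b.
Proof.
move=> b_ge0 Ab; rewrite [leLHS]/Num.Def.normr /= mx_normrE.
by apply/bigmax_leP; split => // -[i j].
Qed.

Lemma mx_norm_trmx m n (A : 'M[R]_(m, n)) : `|A^T| = `|A|.
Proof.
suff le_tr k l (M : 'M[R]_(k, l)) : `|M^T| <= `|M|.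
  by apply/le_anti/andP; split; last rewrite -{1}(trmxK A); exact: le_tr.
by apply: mx_norm_le => // i j; rewrite mxE; exact: mx_entry_le_norm.
Qed.

Lemma trmx_continuous m n : continuous (@trmx R m n).
Proof.
move=> A; apply/(@cvgrPdist_lt _ _ _ (nbhs A) (nbhs_filter A)) => e e_gt0.
apply: filterS (nbhsx_ballx A e e_gt0) => B.
by rewrite /= -linearB mx_norm_trmx -ball_normE.
Qed.

Lemma cV_bounded_closed_compact n (A : set 'cV[R]_n) :
  bounded_set A -> closed A -> compact A.
Proof.
(* Heine-Borel is available for row vectors: transport it along the isometry trmx. *)
move=> bA cA; have -> : A = trmx @` (trmx @^-1` A).
  apply/seteqP; split => [x Ax|_ [v Av <-] //]; by exists x^T; rewrite /= ?trmxK.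
apply: continuous_compact.
  by apply: continuous_subspaceT; exact: trmx_continuous.
apply: bounded_closed_compact.
  case: bA => M [Mreal AM]; exists M; split => // N MN v Av.
  by rewrite /= -mx_norm_trmx; exact: AM.
exact: continuous_closed_preimage (@trmx_continuous _ _) cA.
Qed.

Lemma mulmx_coord_continuous m n (A : 'M[R]_(m, n)) k :
  continuous (fun x : 'cV[R]_n => (A *m x) k 0).
Proof.
have -> : (fun x : 'cV[R]_n => (A *m x) k 0) =
    fun x => \sum_(i < n) A k i * x i 0 by apply: funext => x; rewrite mxE.
apply: continuous_big => [|i _ x]; first exact: add_continuous.
by apply: continuousM; [exact: cst_continuous | exact: coord_continuous].
Qed.

End matrix_topology.

Section sqnorm.
Variables (R : realType) (n : nat).
Implicit Types (d e v : 'cV[R]_n).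

Lemma sqnorm_ge0 v : 0 <= sqnorm v.
Proof. by rewrite sumr_ge0 // => i _; rewrite sqr_ge0. Qed.

Lemma sqnormN v : sqnorm (- v) = sqnorm v.
Proof. by apply: eq_bigr => i _; rewrite mxE sqrrN. Qed.

Lemma sqnorm0 : sqnorm (0 : 'cV[R]_n) = 0.
Proof. by rewrite /sqnorm big1 // => i _; rewrite mxE expr0n. Qed.

Lemma sqnorm_continuous : continuous (@sqnorm R n).
Proof.
apply: continuous_big => [|i _]; first exact: add_continuous.
move=> v; apply: (@continuous_comp _ _ _ (fun w : 'cV[R]_n => w i 0) (fun r => r ^+ 2)).
  exact: coord_continuous.
exact: exprn_continuous.
Qed.

Lemma sqnormD_le d e (t : R) : 0 < t ->
  sqnorm (d + e) <= (1 + t) * sqnorm d + (1 + t^-1) * sqnorm e.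
Proof.
move=> t_gt0; rewrite /sqnorm !mulr_sumr -big_split /=.
apply: ler_sum => i _; rewrite mxE.
have tV : t * t^-1 = 1 by rewrite divff // gt_eqF.
have := sqr_ge0 (t * d i 0 - e i 0); have : 0 < t^-1 by rewrite invr_gt0.
nra.
Qed.

Lemma sqnorm_le_norm v : sqnorm v <= n%:R * `|v| ^+ 2.
Proof.
rewrite mulr_natl -[X in _ *+ X](card_ord n) -sumr_const; apply: ler_sum => i _.
by rewrite -real_normK ?num_real // lerXn2r ?nnegrE // mx_entry_le_norm.
Qed.

Lemma norm_le_sqnorm v : `|v| <= 1 + sqnorm v.
Proof.
apply: mx_norm_le => [|i j]; first by rewrite addr_ge0 // sqnorm_ge0.
rewrite ord1; have := sqr_ge0 (`|v i 0| - 1); have := real_normK (num_real (v i 0)).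
have : v i 0 ^+ 2 <= sqnorm v.
  by rewrite /sqnorm (bigD1 i) //= lerDl sumr_ge0 // => k _; exact: sqr_ge0.
have := normr_ge0 (v i 0); nra.
Qed.

Lemma sqnorm_gap_lbound (c M : R) : 0 < c -> 0 <= M ->
  exists2 dl, 0 < dl & forall d e,
    sqnorm e <= M -> c <= sqnorm (d + e) - sqnorm e -> dl <= sqnorm d.
Proof.
(* t is chosen so that M / t <= c / 2. *)
move=> c_gt0 M_ge0; pose t := 2 * M / c + 1.
have t_gt0 : 0 < t.
  have : 0 <= 2 * M / c by rewrite divr_ge0 ?mulr_ge0 // ltW.
  rewrite /t; lra.
have tc : t * c = 2 * M + c by rewrite mulrDl mul1r divfK // gt_eqF.
have t1_gt0 : 0 < 2 * (1 + t) by rewrite mulr_gt0 // addr_gt0.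
exists (c / (2 * (1 + t))) => [|d e eM gap]; first by rewrite divr_gt0.
rewrite ler_pdivrMr //.
have Vt : t^-1 * sqnorm e <= c / 2.
  have tVe : t * (t^-1 * sqnorm e) = sqnorm e.
    by rewrite mulrA divff ?mul1r // gt_eqF.
  nra.
have := sqnormD_le d e t_gt0; have := sqnorm_ge0 d; lra.
Qed.

End sqnorm.

Definition supp (R : realType) m (v : 'cV[R]_m) : {set 'I_m} :=
  [set i | v i 0 != 0].

Lemma l0normE (R : realType) m (v : 'cV[R]_m) : l0norm v = #|supp v|.
Proof. by apply: eq_card => i; rewrite !inE; apply/asboolP/idP. Qed.

Lemma absmin_ge (R : realType) m (v : 'cV[R]_m) (e : R) :
  (forall i, i \in supp v -> e <= `|v i 0|) -> (e%:E <= absmin v)%E.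
Proof.
move=> ve; apply: (big_ind (fun a => e%:E <= a)%E) => [|a b|i vi].
- exact: leey.
- by rewrite le_min => -> ->.
- by rewrite lee_fin ve // inE.
Qed.

Lemma supp_col_mx_drop (R : realType) m n (a a' : 'cV[R]_m) (b b' : 'cV[R]_n) k :
  k \in supp (col_mx a b) -> supp (col_mx a' b') \subset supp (col_mx a b) :\ k ->
  [/\ supp a' \subset supp a, supp b' \subset supp b &
      supp a' \proper supp a \/ supp b' \proper supp b].
Proof.
have supp_l (x : 'cV[R]_m) (y : 'cV[R]_n) i :
  (lshift n i \in supp (col_mx x y)) = (i \in supp x) by rewrite !inE col_mxEu.
have supp_r (x : 'cV[R]_m) (y : 'cV[R]_n) i :
  (rshift m i \in supp (col_mx x y)) = (i \in supp y) by rewrite !inE col_mxEd.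
move=> kS /fintype.subsetP sub'.
have sub'S j : j \in supp (col_mx a' b') -> j \in supp (col_mx a b).
  by move=> /sub'; rewrite in_setD1 => /andP[].
have sa : supp a' \subset supp a.
  by apply/fintype.subsetP => i; rewrite -(supp_l _ b') -(supp_l _ b); exact: sub'S.
have sb : supp b' \subset supp b.
  by apply/fintype.subsetP => i; rewrite -(supp_r a') -(supp_r a); exact: sub'S.
have k'S : k \notin supp (col_mx a' b').
  by apply/negP => /sub'; rewrite in_setD1 eqxx.
split => //; case: (splitP k) => i ki; [left | right].
all: apply/properP; split => //; exists i.
- by rewrite -(supp_l _ b) (_ : lshift n i = k) //; exact: val_inj.
- by rewrite -(supp_l _ b') (_ : lshift n i = k) //; exact: val_inj.
- by rewrite -(supp_r a) (_ : rshift m i = k) //; exact: val_inj.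
- by rewrite -(supp_r a') (_ : rshift m i = k) //; exact: val_inj.
Qed.

Lemma weighted_card_drop (R : realType) (I J : finType) (lam1 lam2 : R)
    (a a' : {set I}) (b b' : {set J}) :
  0 < lam1 -> 0 < lam2 -> a' \subset a -> b' \subset b ->
  a' \proper a \/ b' \proper b ->
  lam1 * #|a'|%:R + lam2 * #|b'|%:R + Num.min lam1 lam2 <=
    lam1 * #|a|%:R + lam2 * #|b|%:R.
Proof.
move=> lam1_gt0 lam2_gt0 /subset_leq_card sa /subset_leq_card sb.
have m1 : Num.min lam1 lam2 <= lam1 by rewrite ge_min lexx.
have m2 : Num.min lam1 lam2 <= lam2 by rewrite ge_min lexx orbT.
move: sa sb; rewrite -!(ler_nat R) => sa sb.
have natS (x y : nat) : (x < y)%N -> x%:R + 1 <= y%:R :> R.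
  by rewrite -(ler_nat R) -addn1 natrD.
case=> /proper_card/natS; nra.
Qed.

Definition l0pen (R : realType) p n (B : 'M[R]_(p, n)) (lam1 lam2 : R)
    (x : 'cV[R]_n) : R :=
  lam1 * (l0norm (B *m x))%:R + lam2 * (l0norm x)%:R.

Lemma BI_mulmx (R : realType) p n (B : 'M[R]_(p, n)) (x : 'cV[R]_n) :
  BI B *m x = col_mx (B *m x) x.
Proof. by rewrite /BI mul_col_mx mul1mx. Qed.

Lemma closed_box (R : realType) n (l u : 'cV[R]_n) : closed (box l u).
Proof.
pose coord i (x : 'cV[R]_n) := x i 0.
have -> : box l u = \bigcap_(i in setT)
    (coord i @^-1` [set r | l i 0 <= r] `&` coord i @^-1` [set r | r <= u i 0]).
  apply/seteqP; split => x /= xb i; first by move=> _; apply/andP; exact: xb.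
  by have [-> ->] := xb i I.
apply: closed_bigI => i _.
by apply: closedI; apply: continuous_closed_preimage;
  [exact: coord_continuous | exact: closed_ge
  |exact: coord_continuous | exact: closed_le].
Qed.

Lemma closed_supp_sub (R : realType) m n (A : 'M[R]_(m, n)) (S : {set 'I_m}) :
  closed [set x : 'cV[R]_n | supp (A *m x) \subset S].
Proof.
have -> : [set x : 'cV[R]_n | supp (A *m x) \subset S] =
    \bigcap_(j in [set j | j \notin S]) (fun x => (A *m x) j 0) @^-1` [set r | r = 0].
  apply/seteqP; split => x /=.
    move=> /fintype.subsetP AxS j /= jS; apply/eqP; apply: contraNT jS => Axj.
    by apply: AxS; rewrite inE.
  move=> Ax0; apply/fintype.subsetP => j; rewrite inE.
  by apply: contraR => jS; exact/eqP/Ax0.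
apply: closed_bigI => j _; apply: continuous_closed_preimage.
  exact: mulmx_coord_continuous.
exact: closed_eq.
Qed.

Section prox_l0.
Variables (R : realType) (p n : nat) (B : 'M[R]_(p, n)) (lam1 lam2 : R).
Variables (l u : 'cV[R]_n).
Hypotheses (lam1_gt0 : 0 < lam1) (lam2_gt0 : 0 < lam2).
Hypothesis box_has0 : forall i, l i 0 <= 0 <= u i 0.

Local Notation G := (l0pen B lam1 lam2).

Lemma l0pen_ge0 x : 0 <= G x.
Proof. by rewrite addr_ge0 // mulr_ge0 // ltW. Qed.

Lemma l0pen0 : G 0 = 0.
Proof.
have l0norm0 m : l0norm (0 : 'cV[R]_m) = 0%N.
  by rewrite l0normE; apply: eq_card0 => i; rewrite !inE mxE eqxx.
by rewrite /l0pen mulmx0 !l0norm0 !mulr0 addr0.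
Qed.

Lemma l0pen_supp_drop x y k :
  k \in supp (BI B *m x) -> supp (BI B *m y) \subset supp (BI B *m x) :\ k ->
  G y + Num.min lam1 lam2 <= G x.
Proof.
rewrite !BI_mulmx => kS /(supp_col_mx_drop kS)[sa sb sab].
by rewrite /l0pen !l0normE; exact: weighted_card_drop.
Qed.

Lemma box0 : box l u 0.
Proof. by move=> i; rewrite mxE. Qed.

Lemma prox_l0_min mu z x : 0 < mu ->
  prox mu^-1 (gfun B lam1 lam2 l u) z x ->
  box l u x /\ forall y, box l u y ->
    mu / 2 * sqnorm (x - z) + G x <= mu / 2 * sqnorm (y - z) + G y.
Proof.
move=> mu_gt0 xprox.
have gE y : box l u y -> gfun B lam1 lam2 l u y = (G y)%:E.
  by move=> yb; rewrite /gfun /Defs.indic asboolT // adde0.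
have xb : box l u x.
  apply/not_notP => xNb; have := xprox 0.
  by rewrite (gE 0 box0) /gfun /Defs.indic asboolF // !addey.
split => // y yb; have := xprox y.
by rewrite !gE // invfM invrK mul1r [_ * mu]mulrC -!EFinD lee_fin.
Qed.

Lemma prox_l0_sqnorm_le mu z x : 0 < mu ->
  prox mu^-1 (gfun B lam1 lam2 l u) z x -> sqnorm (x - z) <= sqnorm z.
Proof.
move=> mu_gt0 /(prox_l0_min mu_gt0)[_ /(_ 0 box0)].
rewrite l0pen0 addr0 sub0r sqnormN => opt0.
have mu2_gt0 : 0 < mu / 2 by rewrite divr_gt0.
by rewrite -(ler_pM2l mu2_gt0); have := l0pen_ge0 x; lra.
Qed.

Lemma prox_l0_supp_gap mu z x k y : 0 < mu ->
  prox mu^-1 (gfun B lam1 lam2 l u) z x ->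
  k \in supp (BI B *m x) -> box l u y ->
  supp (BI B *m y) \subset supp (BI B *m x) :\ k ->
  2 * Num.min lam1 lam2 / mu <= sqnorm (y - z) - sqnorm (x - z).
Proof.
move=> mu_gt0 /(prox_l0_min mu_gt0)[_ opt] kS yb ysupp.
have := opt y yb; have := l0pen_supp_drop kS ysupp.
by rewrite ler_pdivrMr // mulrBl; lra.
Qed.

Lemma prox_l0_uniform (Mz muu : R) : 0 < muu ->
  exists Mx, exists2 dl, 0 < dl & forall z mu x, `|z| <= Mz -> 0 < mu <= muu ->
    prox mu^-1 (gfun B lam1 lam2 l u) z x ->
    [/\ box l u x, `|x| <= Mx &
      forall k y, k \in supp (BI B *m x) -> box l u y ->
        supp (BI B *m y) \subset supp (BI B *m x) :\ k -> dl <= sqnorm (y - x)].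
Proof.
move=> muu_gt0; pose M2 := n%:R * Mz ^+ 2; pose c := 2 * Num.min lam1 lam2 / muu.
have M2_ge0 : 0 <= M2 by rewrite mulr_ge0 ?sqr_ge0.
have c_gt0 : 0 < c by rewrite divr_gt0 // mulr_gt0 // lt_min lam1_gt0.
have [dl dl_gt0 gap_dl] := sqnorm_gap_lbound n c_gt0 M2_ge0.
exists (1 + M2 + Mz), dl => // z mu x zM /andP[mu_gt0 mu_le] xprox.
have xz_le : sqnorm (x - z) <= M2.
  apply: le_trans (prox_l0_sqnorm_le mu_gt0 xprox) (le_trans (sqnorm_le_norm z) _).
  by rewrite ler_wpM2l // lerXn2r ?nnegrE //; exact: le_trans zM.
split; first exact: (prox_l0_min mu_gt0 xprox).1.
  have := ler_normD (x - z) z; rewrite subrK; have := norm_le_sqnorm (x - z); lra.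
move=> k y kS yb ysupp; apply: gap_dl xz_le _; rewrite addrA subrK.
apply: le_trans (prox_l0_supp_gap mu_gt0 xprox kS yb ysupp).
by rewrite /c ler_pM2l ?mulr_gt0 ?lt_min ?lam1_gt0 // lef_pV2 ?posrE.
Qed.

End prox_l0.

Section supp_drop_lbound.
Variables (R : realType) (p n : nat) (B : 'M[R]_(p, n)) (l u : 'cV[R]_n).

Definition box_supp (S : {set 'I_(p + n)}) : set 'cV[R]_n :=
  [set y | box l u y /\ supp (BI B *m y) \subset S].

Lemma closed_box_supp S : closed (box_supp S).
Proof. by apply: closedI; [exact: closed_box | exact: closed_supp_sub]. Qed.

Lemma BI_coord_lbound S k (Mx dl : R) : 0 < dl ->
  exists2 eta, 0 < eta & forall x, box_supp S x -> `|x| <= Mx ->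
    (forall y, box_supp (S :\ k) y -> dl <= sqnorm (y - x)) ->
    eta <= `|(BI B *m x) k 0|.
Proof.
move=> dl_gt0.
pose C := box_supp S `&` Num.norm @^-1` [set r | r <= Mx] `&`
  \bigcap_(y in box_supp (S :\ k)) (fun x => sqnorm (y - x)) @^-1` [set r | dl <= r].
have C_compact : compact C.
  apply: cV_bounded_closed_compact.
    exists Mx; split; first exact: num_real.
    by move=> N MN x [[_ xM] _]; rewrite /= (le_trans xM) // ltW.
  apply: closedI; first apply: closedI.
  - exact: closed_box_supp.
  - by apply: continuous_closed_preimage; [exact: norm_continuous | exact: closed_le].
  apply: closed_bigI => y _; apply: continuous_closed_preimage; last exact: closed_ge.
  move=> x; apply: continuous_comp; last exact: sqnorm_continuous.
  by apply: continuousB; [exact: cst_continuous | exact: cvg_id].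
have C_gt0 x : C x -> 0 < `|(BI B *m x) k 0|.
  move=> [[[xb xS] _] xfar]; rewrite normr_gt0; apply/negP => /eqP wk0.
  have xSk : box_supp (S :\ k) x.
    split => //; apply/fintype.subsetP => j jx.
    rewrite in_setD1 (fintype.subsetP xS) // andbT.
    by apply: contraTneq jx => ->; rewrite inE wk0 eqxx.
  by have := xfar x xSk; rewrite /= subrr sqnorm0 leNgt dl_gt0.
have wk_cont : continuous (fun x : 'cV[R]_n => `|(BI B *m x) k 0|).
  move=> x; apply: continuous_comp; first exact: mulmx_coord_continuous.
  exact: norm_continuous.
have [eta eta_gt0 etaC] := compact_gt0_lbound C_compact wk_cont C_gt0.
by exists eta => // x xS xM xfar; apply: etaC.
Qed.

Lemma BI_coord_uniform_lbound (Mx dl : R) : 0 < dl ->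
  exists2 eta, 0 < eta & forall S k x, box_supp S x -> `|x| <= Mx ->
    (forall y, box_supp (S :\ k) y -> dl <= sqnorm (y - x)) ->
    eta <= `|(BI B *m x) k 0|.
Proof.
move=> dl_gt0.
have [|Sk|eta eta_gt0 etaP] := @fin_uniform_gt0 _ R (fun Sk eta => forall x,
    box_supp Sk.1 x -> `|x| <= Mx ->
    (forall y, box_supp (Sk.1 :\ Sk.2) y -> dl <= sqnorm (y - x)) ->
    eta <= `|(BI B *m x) Sk.2 0|).
- by move=> Sk e e' /andP[_ e'e] etaP x xS xM xfar; rewrite (le_trans e'e) ?etaP.
- exact: BI_coord_lbound.
- by exists eta => // S k; exact: (etaP (S, k)).
Qed.

End supp_drop_lbound.

Theorem lemma3p2 (R : realType) (p n : nat) (B : 'M[R]_(p, n)) (lam1 lam2 : R)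
  (l u : 'cV[R]_n) (Xi : set 'cV[R]_n) (mul muu : R) :
  0 < lam1 -> 0 < lam2 ->
  (forall i, l i 0 <= 0 <= u i 0) ->
  compact Xi ->
  0 < mul -> mul < muu ->
  exists nu : R, 0 < nu /\
    (nu%:E <= ereal_inf
       [set absmin (BI B *m x) | x in
          [set x | exists (z : 'cV[R]_n) (mu : R), Xi z /\ (mul <= mu <= muu)%R /\
                     prox mu^-1%R (gfun B lam1 lam2 l u) z x] `\ (0 : 'cV[R]_n)%R])%E.
Proof.
move=> lam1_gt0 lam2_gt0 box_has0 Xi_compact mul_gt0 mul_lt_muu.
have [Mz Xi_bounded] : exists Mz, forall z, Xi z -> `|z| <= Mz.
  have [M [_ XiM]] := compact_bounded Xi_compact.
  by exists (M + 1) => z Xz; apply: XiM => //; rewrite ltrDl.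
have [Mx [dl dl_gt0 prox_bounds]] :=
  prox_l0_uniform B lam1_gt0 lam2_gt0 box_has0 Mz (lt_trans mul_gt0 mul_lt_muu).
have [nu nu_gt0 nu_lbound] := BI_coord_uniform_lbound B l u Mx dl_gt0.
exists nu; split => //; apply: le_ereal_inf_tmp.
move=> _ [x [[z [mu [Xz [mu_in xprox]]]] _] <-].
have mu_range : 0 < mu <= muu.
  by case/andP: mu_in => mul_le ->; rewrite (lt_le_trans mul_gt0).
have [xb xM xfar] := prox_bounds z mu x (Xi_bounded z Xz) mu_range xprox.
apply: absmin_ge => k kS; apply: (nu_lbound (supp (BI B *m x))) => // y [yb ysupp].
exact: xfar kS yb ysupp.
Qed.
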